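(* Let $G$ be a finite group and $\mathcal{H}$ a special set of subgroups of $G$ with $d_G(\mathcal{H})>1$. Let $p$ be a prime divisor of $d_G(\mathcal{H})$ and $P$ a $p$-Sylow subgroup of $G$. Then there is a subset $\mathcal{H}_P^{*}$ of $\mathcal{H}_P^{\mathrm{set}}$ which is special (as a set of subgroups of $P$) and satisfies $\#\mathcal{H}_P^{*}\geq\#\mathcal{H}$.
   Context: For a subgroup $H$ of a finite group $G$, $N^G(H):=\bigcap_{g\in G}gHg^{-1}$ is its normal core. A set $\mathcal{H}$ of subgroups of $G$ is special if $G\notin\mathcal{H}$, $\#\mathcal{H}\geq2$, and for all $H,H'\in\mathcal{H}$ with $H\neq H'$ one has $N^G(H)H'=G$ or $N^G(H')H=G$. $d_G(\mathcal{H}):=\gcd((G:H)\mid H\in\mathcal{H})$. For a subgroup $P\leq G$, $\mathcal{H}_P$ is the multiset of subgroups of $P$ consisting of $P\cap gHg^{-1}$ for every $H\in\mathcal{H}$ and every $g$ in a fixed complete set of representatives of $P\backslash G/H$; $\mathcal{H}_P^{\mathrm{set}}$ is its underlying set. *)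

From mathcomp Require Import all_boot all_fingroup all_solvable.
Set Implicit Arguments. Unset Strict Implicit. Unset Printing Implicit Defensive.
Local Open Scope group_scope.

Definition ncore (gT : finGroupType) (G H : {set gT}) : {set gT} :=
  \bigcap_(g in G) (H :^ g).

Definition special_set (gT : finGroupType) (G : {group gT}) (Hs : {set {group gT}}) : Prop :=
  [/\ forall H : {group gT}, H \in Hs -> H \subset G,
      G \notin Hs,
      2 <= #|Hs|
    & forall H H' : {group gT}, H \in Hs -> H' \in Hs -> H != H' ->
        (ncore G H * H' = G) \/ (ncore G H' * H = G)].

Definition dG (gT : finGroupType) (G : {group gT}) (Hs : {set {group gT}}) : nat :=
  \big[gcdn/0]_(H in Hs) #|G : H|.

Definition double_coset_reps (gT : finGroupType) (G P H : {set gT}) (R : {set gT}) : Prop :=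
  R \subset G /\
  forall x, x \in G -> exists r, [/\ r \in R, x \in (P :* r) * H &
     forall r', r' \in R -> x \in (P :* r') * H -> r' = r].

(* Underlying set of the multiset H_P: P ∩ g H g^-1 for H in Hs, g in reps H.
   Note g H g^-1 = H :^ g^-1 in mathcomp's convention (x ^ g = g^-1 x g). *)
Definition HPset (gT : finGroupType) (P : {group gT}) (Hs : {set {group gT}})
    (reps : {group gT} -> {set gT}) : {set {group gT}} :=
  [set (P :&: H :^ g^-1)%G | H in Hs, g in reps H].

From mathcomp Require Import all_boot all_fingroup all_solvable.
Set Implicit Arguments. Unset Strict Implicit. Unset Printing Implicit Defensive.
Local Open Scope group_scope.

(* For each H in the special set pick a double coset representative r with
   P :&: H :^ r^-1 a Sylow p-subgroup of H :^ r^-1, and send H to that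
   intersection.  If N = N^G(H) and N * H' = G, counting p-parts gives
   (P :&: N) * (P :&: H' :^ r'^-1) = P, and P :&: N lies in the core of the
   image of H in P; so the images again satisfy the special-set condition.
   They are proper subgroups of P because p divides every index (G : H), so
   the same relation also forces the map to be injective on the special set. *)

Lemma ncore_gcore (gT : finGroupType) (G H : {set gT}) : ncore G H = gcore H G.
Proof. by []. Qed.

Lemma ncore_mul_proper (gT : finGroupType) (P Q : {group gT}) :
  Q \proper P -> ncore P Q * Q != P.
Proof.
move=> ltQP; apply: contraTneq ltQP => <-.
by rewrite properE mul_subG ?andbF // ncore_gcore gcore_sub.
Qed.

Lemma special_set_imset (gT : finGroupType) (G P : {group gT})
    (Hs : {set {group gT}}) (f : {group gT} -> {group gT}) :
    special_set G Hs ->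
    {in Hs, forall H : {group gT}, f H \proper P} ->
    {in Hs &, forall H H' : {group gT}, ncore G H * H' = G -> ncore P (f H) * f H' = P} ->
  special_set P (f @: Hs) /\ #|f @: Hs| = #|Hs|.
Proof.
move=> [_ _ Hs2 specHs] ltfP fmul.
have f_inj : {in Hs &, injective f}.
  move=> H H' HsH HsH' eqf; apply/eqP/negPn/negP => neqHH'.
  have [] := specHs H H' HsH HsH' neqHH' => /fmul mulP.
  - by move: (ncore_mul_proper (ltfP H HsH)); rewrite {2}eqf mulP ?eqxx.
  - by move: (ncore_mul_proper (ltfP H' HsH')); rewrite -{2}eqf mulP ?eqxx.
have card_fHs : #|f @: Hs| = #|Hs| by rewrite card_in_imset.
split=> //; split.
- by move=> _ /imsetP[H HsH ->]; apply: proper_sub (ltfP H HsH).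
- by apply/imsetP=> -[H HsH eqPf]; move: (ltfP H HsH); rewrite -eqPf properE subxx.
- by rewrite card_fHs.
- move=> _ _ /imsetP[H HsH ->] /imsetP[H' HsH' ->] neqf.
  have neqHH' : H != H' by apply: contraNneq neqf => ->.
  by case: (specHs H H' HsH HsH' neqHH') => /fmul-> //; [left | right].
Qed.

Section SylowIntersections.

Variables (gT : finGroupType) (p : nat) (G P : {group gT}).
Hypothesis sylP : p.-Sylow(G) P.

Lemma Sylow_mulI_normal (N K : {group gT}) :
    N <| G -> K \subset G -> N * K = G -> p.-Sylow(K) (P :&: K) ->
  (P :&: N) * (P :&: K) = P.
Proof.
move=> nsNG sKG mulNK sylPK.
have sylPN : p.-Sylow(N) (N :&: P) := Sylow_setI_normal nsNG sylP.
have nsNKK : N :&: K <| K by rewrite setIC (normalGI sKG nsNG).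
have sylPNK : p.-Sylow(N :&: K) (N :&: K :&: (P :&: K)) :=
  Sylow_setI_normal nsNKK sylPK.
have capPNK : (P :&: N) :&: (P :&: K) = N :&: K :&: (P :&: K).
  by apply/setP=> y; rewrite !inE; do ![case: (y \in _)].
have card_PN : #|P :&: N| = (#|N|`_p)%N by rewrite setIC (card_Hall sylPN).
have card_mul := mul_cardG [group of P :&: N] [group of P :&: K].
rewrite /= capPNK (card_Hall sylPNK) (card_Hall sylPK) card_PN in card_mul.
have /eqP := congr1 (fun n => n`_p)%N (mul_cardG N K).
rewrite mulNK !partnM // card_mul -(card_Hall sylP) eqn_pmul2r ?part_gt0 //.
move=> /eqP card_P; apply/eqP; rewrite eqEcard mul_subG ?subsetIl //=.
by rewrite card_P.
Qed.

(* A Sylow subgroup of H is conjugate into P, and the property survives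
   replacing the conjugating element by its representative in P\G/H. *)
Lemma double_coset_reps_Sylow (H : {group gT}) (R : {set gT}) :
    H \subset G -> double_coset_reps G P H R ->
  exists2 r, r \in R & p.-Sylow(H :^ r^-1) (P :&: H :^ r^-1).
Proof.
move=> sHG [_ repsR].
have [S sylS] := Sylow_exists p H.
have [x Gx sSPx] :=
  Sylow_subJ sylP (subset_trans (pHall_sub sylS) sHG) (pHall_pgroup sylS).
have sylPHx : p.-Sylow(H :^ x^-1) (P :&: H :^ x^-1).
  have sylSx : p.-Sylow(H :^ x^-1) (S :^ x^-1) by rewrite pHallJ2.
  have pPHx : p.-group (P :&: H :^ x^-1).
    exact: pgroupS (subsetIl _ _) (pHall_pgroup sylP).
  have sSPHx : S :^ x^-1 \subset P :&: H :^ x^-1.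
    by rewrite subsetI sub_conjgV sSPx conjSg (pHall_sub sylS).
  by rewrite (sub_pHall sylSx pPHx sSPHx (subsetIr _ _)).
have [r [Rr /mulsgP[_ h /rcosetP[y Py ->] Hh def_x] _]] := repsR x Gx.
exists r => //.
rewrite def_x !invMg !conjsgM (conjGid (groupVr Hh)) in sylPHx.
by rewrite -{1}(conjGid (groupVr Py)) -conjIg pHallJ2 in sylPHx.
Qed.

Lemma Sylow_notsub_conjg (H : {group gT}) (g : gT) :
  prime p -> H \subset G -> p %| #|G : H| -> ~~ (P \subset H :^ g).
Proof.
move=> p_pr sHG p_dvd_iHG; apply/negP => /cardSg.
rewrite cardJg (card_Hall sylP) p_part pfactor_dvdn // -(Lagrange sHG).
rewrite lognM ?cardG_gt0 ?indexg_gt0 // -{2}[logn p #|H|]addn0 leq_add2l.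
by rewrite leqNgt logn_gt0 mem_primes p_pr indexg_gt0 p_dvd_iHG.
Qed.

Lemma ncore_mulI_conjg (H K : {group gT}) (g x : gT) :
    g \in G -> x \in G -> ncore G H * K = G ->
    p.-Sylow(K :^ x) (P :&: K :^ x) ->
  ncore P (P :&: H :^ g) * (P :&: K :^ x) = P.
Proof.
rewrite ncore_gcore => Gg Gx mulNK sylPKx.
have sKG : K \subset G by rewrite -mulNK mulG_subr.
have nsNG : gcore H G <| G.
  by rewrite /normal gcore_norm andbT -{2}mulNK mulG_subl.
have mulNKx : gcore_group H G * (K :^ x)%G = G.
  by rewrite /= -(normsP (gcore_norm H G) x Gx) -conjsMg mulNK conjGid.
have sKxG : K :^ x \subset G by rewrite sub_conjg conjGid ?groupV.
have mulPNK := Sylow_mulI_normal nsNG sKxG mulNKx sylPKx.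
apply/eqP; rewrite eqEsubset mul_subG ?subsetIl //=; last first.
  by rewrite ncore_gcore (subset_trans (gcore_sub _ _)) ?subsetIl.
rewrite -{1}mulPNK mulSg // ncore_gcore gcore_max //=.
  by rewrite setIS // (bigcap_inf g).
by rewrite normsI ?normG // (subset_trans (pHall_sub sylP)) ?normal_norm.
Qed.

End SylowIntersections.

Theorem proposition5p3 (gT : finGroupType) (G : {group gT}) (Hs : {set {group gT}})
    (p : nat) (P : {group gT}) (reps : {group gT} -> {set gT}) :
  special_set G Hs ->
  1 < dG G Hs ->
  prime p -> p %| dG G Hs ->
  P \in 'Syl_p(G) ->
  (forall H : {group gT}, H \in Hs -> double_coset_reps G P H (reps H)) ->
  exists Hstar : {set {group gT}},
    [/\ Hstar \subset HPset P Hs reps, special_set P Hstar & #|Hs| <= #|Hstar|].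
Proof.
move=> specHs _ p_pr p_dvd_d; rewrite inE => sylP repsHs.
have [sHsG _ _ _] := specHs.
have p_dvd_index H : H \in Hs -> p %| #|G : H|.
  by move=> HsH; rewrite (dvdn_trans p_dvd_d) // /dG (bigD1 H) ?dvdn_gcdl.
have /fin_all_exists[r r_reps] (H : {group gT}) : exists x : gT, H \in Hs ->
    x \in reps H /\ p.-Sylow(H :^ x^-1) (P :&: H :^ x^-1).
  have [HsH | _] := boolP (H \in Hs); last by exists 1.
  by have [x] := double_coset_reps_Sylow sylP (sHsG H HsH) (repsHs H HsH); exists x.
have Gr H : H \in Hs -> (r H)^-1 \in G.
  move=> HsH; have [sRG _] := repsHs H HsH.
  by rewrite groupV (subsetP sRG) ?(r_reps H HsH).1.
pose f H := (P :&: H :^ (r H)^-1)%G.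
have [specf card_f] : special_set P (f @: Hs) /\ #|f @: Hs| = #|Hs|.
  apply: (special_set_imset specHs) => [H HsH | H H' HsH HsH' /= mulNH'].
    rewrite properE subsetIl subsetI subxx /=.
    by rewrite (Sylow_notsub_conjg sylP) ?sHsG ?p_dvd_index.
  by apply: (ncore_mulI_conjg sylP); rewrite ?Gr //; apply: (r_reps H' HsH').2.
exists (f @: Hs); split; rewrite ?card_f //.
apply/subsetP => _ /imsetP[H HsH ->].
by apply: imset2_f => //; apply: (r_reps H HsH).1.
Qed.
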